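(* Assume $r_t^l=r^l$ and $b_t^l=b^l$ for all $t\in\{1,\dots,T\}$ and $l\in\{1,\dots,L\}$. Given parameters $\gamma=\{\gamma_l\}_{l\le L}$, consider PB2: minimize $F(\rho)=\sum_{t=1}^T\sum_{l=1}^L\rho_t^l r^l b^l(\rho_t^l)$ s.t. $\sum_{t=1}^T\rho_t^l\ge\gamma_l$ for all $l$, $\rho_t^l\in[0,1]$; and PB5: minimize $\hat F(\hat\rho)=T\sum_{l=1}^L\hat\rho^l r^l b^l(\hat\rho^l)$ s.t. $T\hat\rho^l\ge\gamma_l$ for all $l$, $\hat\rho^l\in[0,1]$. If $\hat\rho^\ast=\{\hat\rho^l_\ast\}_{l\le L}$ is an optimal solution of PB5, then $\rho^\ast=\{\rho_t^{l\ast}\}$ with $\rho_t^{l\ast}=\hat\rho^l_\ast$ for all $t$ and $l$ is an optimal solution of PB2.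
   Context: $T,L$ positive integers; each $r^l$ is a positive integer and each $b^l:[0,1]\to[0,b^l_{\max}]$ is strictly increasing and convex. *)

From mathcomp Require Import all_boot all_order all_algebra.
Set Implicit Arguments. Unset Strict Implicit. Unset Printing Implicit Defensive.
Import Order.TTheory GRing.Theory Num.Theory.
Local Open Scope ring_scope.

Section Defs.
Variable R : realFieldType.

Definition in01 (x : R) := (0 <= x) && (x <= 1).

Definition strinc01 (f : R -> R) :=
  forall x y, in01 x -> in01 y -> x < y -> f x < f y.

Definition convex01 (f : R -> R) :=
  forall x y l, in01 x -> in01 y -> 0 <= l -> l <= 1 ->
    f (l * x + (1 - l) * y) <= l * f x + (1 - l) * f y.

Variables (T L : nat) (r : 'I_L -> nat) (b : 'I_L -> R -> R)
          (gamma : 'I_L -> R).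

Definition F_PB2 (rho : 'I_T -> 'I_L -> R) : R :=
  \sum_(t < T) \sum_(l < L) rho t l * (r l)%:R * b l (rho t l).

Definition feasible_PB2 (rho : 'I_T -> 'I_L -> R) : Prop :=
  (forall l, \sum_(t < T) rho t l >= gamma l) /\ (forall t l, in01 (rho t l)).

Definition optimal_PB2 (rho : 'I_T -> 'I_L -> R) : Prop :=
  feasible_PB2 rho /\ forall rho', feasible_PB2 rho' -> F_PB2 rho <= F_PB2 rho'.

Definition F_PB5 (rh : 'I_L -> R) : R :=
  T%:R * \sum_(l < L) rh l * (r l)%:R * b l (rh l).

Definition feasible_PB5 (rh : 'I_L -> R) : Prop :=
  (forall l, T%:R * rh l >= gamma l) /\ (forall l, in01 (rh l)).

Definition optimal_PB5 (rh : 'I_L -> R) : Prop :=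
  feasible_PB5 rh /\ forall rh', feasible_PB5 rh' -> F_PB5 rh <= F_PB5 rh'.

End Defs.

(* The objective of PB2 is a sum over t of the same convex
   function of rho_t^l, since x |-> x r b(x) is convex when b is convex,
   increasing and nonnegative on [0,1].  Replacing each rho_t^l by its time average
   gives a feasible point of PB5 whose value, by Jensen's inequality, is at
   most the value of rho in PB2; conversely a constant-in-t point has the
   same value in both problems. *)

From mathcomp Require Import all_boot all_order all_algebra.
From mathcomp Require Import ring lra.
Set Implicit Arguments. Unset Strict Implicit. Unset Printing Implicit Defensive.
Import Order.TTheory GRing.Theory Num.Theory.
Local Open Scope ring_scope.

Section Convexity.
Variable R : realFieldType.
Implicit Types (f g : R -> R) (x y l c : R).

Lemma in01_convex x y l : in01 x -> in01 y -> 0 <= l -> l <= 1 ->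
  in01 (l * x + (1 - l) * y).
Proof. by move=> /andP[? ?] /andP[? ?] ? ?; apply/andP; split; nra. Qed.

Lemma strinc01_sub_mul_ge0 f x y : strinc01 f -> in01 x -> in01 y ->
  0 <= (x - y) * (f x - f y).
Proof.
move=> incf hx hy; case: (ltrgtP x y) => [xy|yx|->]; last by rewrite !subrr mul0r.
- by have := incf x y hx hy xy; nra.
- by have := incf y x hy hx yx; nra.
Qed.

Lemma convex01_scale f c : 0 <= c -> convex01 f -> convex01 (fun x => c * f x).
Proof.
move=> c0 cf x y l hx hy l0 l1.
have := ler_wpM2l c0 (cf x y l hx hy l0 l1); lra.
Qed.

Lemma convex01_id_mul f : strinc01 f -> convex01 f ->
  (forall x, in01 x -> 0 <= f x) -> convex01 (fun x => x * f x).
Proof.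
move=> incf cf f0 x y l hx hy l0 l1.
set z := l * x + (1 - l) * y.
have z0 : 0 <= z by case/andP: (in01_convex hx hy l0 l1).
have fz := ler_wpM2l z0 (cf x y l hx hy l0 l1).
have defect : l * (x * f x) + (1 - l) * (y * f y) - z * (l * f x + (1 - l) * f y)
  = l * (1 - l) * ((x - y) * (f x - f y)) by rewrite /z; ring.
have := strinc01_sub_mul_ge0 incf hx hy.
have : 0 <= l * (1 - l) by nra.
nra.
Qed.

Lemma sum_in01 n (x : 'I_n -> R) : (forall i, in01 (x i)) ->
  0 <= \sum_(i < n) x i <= n%:R.
Proof.
move=> hx; apply/andP; split; first by apply: sumr_ge0 => i _; case/andP: (hx i).
rewrite -[n in n%:R]card_ord -sumr_const.
by apply: ler_sum => i _; case/andP: (hx i).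
Qed.

Lemma mean_in01 n (x : 'I_n -> R) : (0 < n)%N -> (forall i, in01 (x i)) ->
  in01 ((\sum_(i < n) x i) / n%:R).
Proof.
move=> n0 /sum_in01 /andP[s0 sn]; have np : 0 < n%:R :> R by rewrite ltr0n.
by apply/andP; split; [rewrite divr_ge0 // ltW | rewrite ler_pdivrMr // mul1r].
Qed.

Lemma jensen01 g n (x : 'I_n -> R) : convex01 g -> (0 < n)%N ->
  (forall i, in01 (x i)) ->
  n%:R * g ((\sum_(i < n) x i) / n%:R) <= \sum_(i < n) g (x i).
Proof.
move=> cg; case: n x => // n x _; elim: n x => [|n IH] x hx.
  by rewrite !big_ord1 divr1 mul1r.
rewrite big_ord_recr [X in _ <= X]big_ord_recr /=.
set x' := fun i : 'I_n.+1 => x (widen_ord (leqnSn n.+1) i).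
have hx' : forall i, in01 (x' i) by move=> i; exact: hx.
have := IH x' hx'; have := mean_in01 (ltn0Sn n) hx'.
rewrite -/(x' _); set m := \sum_(i < n.+1) x' i.
move=> hm IHx; set k : R := n.+1%:R in hm IHx *.
have kp : 0 < k by rewrite ltr0n.
have k1 : 0 < k + 1 by lra.
rewrite -natr1 -/k.
(* The new mean is the convex combination of the last point and the old mean with weight 1/(k+1). *)
have -> : (m + x ord_max) / (k + 1)
    = (k + 1)^-1 * x ord_max + (1 - (k + 1)^-1) * (m / k).
  by field; apply/andP; split; lra.
have l0 : 0 <= (k + 1)^-1 by rewrite invr_ge0; lra.
have l1 : (k + 1)^-1 <= 1 by rewrite invf_le1; lra.
have := ler_wpM2l (ltW k1) (cg _ _ _ (hx ord_max) hm l0 l1).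
have -> : (k + 1) * ((k + 1)^-1 * g (x ord_max) + (1 - (k + 1)^-1) * g (m / k))
    = g (x ord_max) + k * g (m / k) by field; lra.
lra.
Qed.

End Convexity.

Section Problems.
Variables (R : realFieldType) (T L : nat) (r : 'I_L -> nat)
  (b : 'I_L -> R -> R) (gamma : 'I_L -> R).

Definition time_mean (rho : 'I_T -> 'I_L -> R) (l : 'I_L) : R :=
  (\sum_(t < T) rho t l) / T%:R.

Lemma sum_const_ord (c : R) : \sum_(t < T) c = T%:R * c.
Proof. by rewrite sumr_const card_ord mulr_natl. Qed.

Lemma F_PB2_const_in_time rh : F_PB2 r b (fun (_ : 'I_T) l => rh l) = F_PB5 T r b rh.
Proof. by rewrite /F_PB2 /F_PB5 sum_const_ord. Qed.

Lemma feasible_PB2_const_in_time rh :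
  feasible_PB5 T gamma rh -> feasible_PB2 gamma (fun (_ : 'I_T) l => rh l).
Proof. by case=> hg h01; split=> // l; rewrite sum_const_ord. Qed.

Hypothesis T_gt0 : (0 < T)%N.

Lemma feasible_PB5_time_mean rho :
  feasible_PB2 gamma rho -> feasible_PB5 T gamma (time_mean rho).
Proof.
case=> hg h01; split=> l; last exact: mean_in01.
by rewrite /time_mean mulrC divfK ?pnatr_eq0 -?lt0n.
Qed.

Lemma F_PB5_time_mean_le rho :
  (forall l, strinc01 (b l)) -> (forall l, convex01 (b l)) ->
  (forall l x, in01 x -> 0 <= b l x) ->
  feasible_PB2 gamma rho -> F_PB5 T r b (time_mean rho) <= F_PB2 r b rho.
Proof.
move=> incb cb b0 [_ h01].
rewrite /F_PB5 /F_PB2 exchange_big mulr_sumr /=; apply: ler_sum => l _.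
have cvx : convex01 (fun x => x * (r l)%:R * b l x).
  have E u : u * (r l)%:R * b l u = (r l)%:R * (u * b l u) by ring.
  move=> x y w; rewrite !E.
  exact: convex01_scale (ler0n R (r l)) (convex01_id_mul (incb l) (cb l) (b0 l)) x y w.
exact: jensen01 cvx T_gt0 (h01^~ l).
Qed.

End Problems.

Theorem lemma6 (R : realFieldType) (T L : nat) (r : 'I_L -> nat)
  (b : 'I_L -> R -> R) (bmax : 'I_L -> R) (gamma : 'I_L -> R) :
  (0 < T)%N -> (0 < L)%N ->
  (forall l, (0 < r l)%N) ->
  (forall l, strinc01 (b l)) ->
  (forall l, convex01 (b l)) ->
  (forall l x, in01 x -> 0 <= b l x <= bmax l) ->
  forall rh : 'I_L -> R,
    optimal_PB5 T r b gamma rh ->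
    optimal_PB2 r b gamma (fun (_ : 'I_T) l => rh l).
Proof.
move=> T0 _ _ incb cb bb rh [feas opt].
have b0 l x (hx : in01 x) : 0 <= b l x by case/andP: (bb l x hx).
split; first exact: feasible_PB2_const_in_time.
move=> rho feas_rho; rewrite F_PB2_const_in_time.
exact: le_trans (opt _ (feasible_PB5_time_mean T0 feas_rho))
               (F_PB5_time_mean_le r T0 incb cb b0 feas_rho).
Qed.
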